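(* Let $\mathcal{X}$ be a finite set and $\underline{Q}$ a lower transition rate operator on $\mathcal{L}(\mathcal{X})$. Let $f\in\mathcal{L}(\mathcal{X})$ and $x\in\mathcal{X}$ be such that $f(x)>\min f$. Then $\underline{T}_tf(x)>\min f$ for all $t\ge0$.
   Context: $\mathcal{L}(\mathcal{X})$ is the set of real-valued functions on $\mathcal{X}$ with pointwise operations and order, real constants identified with constant functions, $\mathbb{I}_y$ the indicator of $\{y\}$. A lower transition rate operator is a map $\underline{Q}\colon\mathcal{L}(\mathcal{X})\to\mathcal{L}(\mathcal{X})$ such that for all $f,g$, $\lambda\ge0$, $\mu\in\mathbb{R}$, $x,y\in\mathcal{X}$: $\underline{Q}(\mu)=0$; $\underline{Q}(f+g)\ge\underline{Q}f+\underline{Q}g$; $\underline{Q}(\lambda f)=\lambda\underline{Q}f$; $x\ne y\Rightarrow\underline{Q}(\mathbb{I}_y)(x)\ge0$. For each $f$, $t\mapsto\underline{T}_tf$ is the unique solution on $[0,\infty)$ of $\frac{d}{dt}\underline{T}_tf=\underline{Q}\,\underline{T}_tf$ with $\underline{T}_0f=f$ (existence and uniqueness are known). *)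

From HB Require Import structures.
From mathcomp Require Import all_boot all_order all_algebra.
From mathcomp Require Import all_classical all_reals topology normedtype derive.
Set Implicit Arguments. Unset Strict Implicit. Unset Printing Implicit Defensive.
Import Order.TTheory GRing.Theory Num.Theory.
Import numFieldNormedType.Exports.
Local Open Scope classical_set_scope.
Local Open Scope ring_scope.

(* L(X) = X -> R, with pointwise operations; constants as constant functions. *)

Definition indic {R : realType} {X : finType} (y : X) : X -> R :=
  fun z => if z == y then 1 else 0.

Definition lower_rate_op {R : realType} {X : finType}
  (Q : (X -> R) -> (X -> R)) : Prop :=
  [/\ (forall (mu : R) (z : X), Q (fun _ => mu) z = 0),
      (forall (f g : X -> R) (z : X), Q f z + Q g z <= Q (fun w => f w + g w) z),
      (forall (lam : R) (f : X -> R) (z : X), 0 <= lam ->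
          Q (fun w => lam * f w) z = lam * Q f z)
    & (forall x y : X, x != y -> 0 <= Q (indic y) x)].

(* T : R -> L(X) solves d/dt T_t = Q T_t on [0, +oo) with T_0 = f
   (two-sided derivative for t > 0, right derivative at t = 0). *)
Definition solves_lower_ode {R : realType} {X : finType}
  (Q : (X -> R) -> (X -> R)) (f : X -> R) (T : R -> X -> R) : Prop :=
  [/\ T 0 = f,
      (forall t : R, 0 < t -> forall y : X,
          is_derive t 1 (fun s => T s y) (Q (T t) y))
    & (forall y : X,
          (fun h : R => h^-1 * (T h y - T 0 y)) @ (0 : R)^'+ --> Q (T 0) y)].

(* min f over the finite nonempty set X (x0 any element, used as seed) *)
Definition fmin {R : realType} {X : finType} (f : X -> R) (x0 : X) : R :=
  \big[Num.min/f x0]_(y : X) f y.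

From HB Require Import structures.
From mathcomp Require Import all_boot all_order all_algebra.
From mathcomp Require Import all_classical all_reals topology normedtype derive.
From mathcomp Require Import sequences exp ring lra.
Import Order.TTheory GRing.Theory Num.Theory.
Import numFieldNormedType.Exports.
Local Open Scope classical_set_scope.
Local Open Scope ring_scope.

(* Both bounds come from a first-exit argument for a finite family g_i of
   functions on [0, +oo): if every g_i starts positive and, whenever the
   family is nonnegative at some t > 0 and g_i t = 0, the derivative of g_i
   at t is positive, then no g_i ever reaches 0.
   For g_y s = T_s y - m + eps (s + 1), with m a lower bound of f, this keeps
   T_t above m: where T_s attains its minimum at y, Q (T_s) y >= 0.
   For g s = e^(N s) (T_s x - m) - (f x - m) / 2 with N > c = |Q (I_x) x|,
   it keeps T_t x above m: Q (T_s) x >= (T_s x - m) Q (I_x) x >= - c (T_s x - m),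
   so the weight e^(N s) outgrows the worst-case decay of T_s x - m. *)

Section RealLemmas.
Variable R : realType.

Lemma derivable1_cvg (f : R -> R) (t : R) :
  derivable f t 1 -> f u @[u --> t] --> f t.
Proof. by move=> /derivable1_diffP/differentiable_continuous. Qed.

Lemma derive1_le0_of_left_min (f : R -> R) (t eta : R) : 0 < eta ->
  derivable f t 1 -> (forall u, t - eta < u -> u < t -> f t <= f u) ->
  'D_1 f t <= 0.
Proof.
move=> eta0 df tmin; rewrite ['D_1 f t]cvg_at_leftE //.
apply: limr_le.
  rewrite -(cvg_at_leftE (fun h => h^-1 *: ((f \o shift t) _ - f t))) //.
  apply: cvg_trans df; apply: cvg_app.
  move=> A [e e0 Ae]; exists e => // h he h0; apply: Ae => //.
  exact/ltr0_neq0.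
near=> h; apply: mulr_le0_ge0.
  by rewrite invr_le0; apply: ltW; near: h; exact: nbhs_left_lt.
rewrite subr_ge0 [_%:A]mulr1 /=; apply: tmin.
  by rewrite [t - eta]addrC ltrD2r; near: h; apply: nbhs_left_gt; rewrite oppr_lt0.
by rewrite gtrDr; near: h; exact: nbhs_left_lt.
Unshelve. all: by end_near. Qed.

Lemma cvg_at_right0_of_quotient (u : R -> R) (L : R) :
  (fun h => h^-1 * (u h - u 0)) @ 0^'+ --> L -> u h @[h --> 0^'+] --> u 0.
Proof.
move=> cvq.
have cvu : (fun h => u 0 + h * (h^-1 * (u h - u 0))) @ 0^'+ --> u 0 + 0 * L.
  by apply: cvgD; [exact: cvg_cst | apply: cvgM => //; exact: cvg_at_right_filter].
rewrite mul0r addr0 in cvu; apply: cvg_trans cvu; apply: near_eq_cvg.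
near=> h; have h0 : h != 0 by near: h; exact: nbhs_right_neq.
by rewrite /= mulrA mulfV // mul1r addrC subrK.
Unshelve. all: by end_near. Qed.

Lemma is_derive_expRX (n : nat) (s : R) :
  is_derive s 1 (fun u => expR u ^+ n) (n%:R * expR s ^+ n).
Proof.
have := is_deriveX n (is_derive_expR s); rewrite exprfctE => dX.
apply: is_derive_eq dX _; case: n => [|n] /=; first by rewrite !mul0r scale0r.
by rewrite -[LHS]/(n.+1%:R * expR s ^+ n * expR s) -mulrA -exprSr.
Qed.

Section Barrier.
Variables (I : finType) (g dg : I -> R -> R).
Hypotheses (g0_gt0 : forall i, 0 < g i 0)
  (g_cvg0 : forall i, g i s @[s --> 0^'+] --> g i 0)
  (g_derive : forall t : R, 0 < t -> forall i, is_derive t 1 (g i) (dg i t))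
  (dg_gt0_at_zero : forall (t : R) i, 0 < t -> (forall j, 0 <= g j t) ->
     g i t = 0 -> 0 < dg i t).

Lemma barrier_cvg_right (i : I) (t : R) : 0 <= t -> g i u @[u --> t^'+] --> g i t.
Proof.
rewrite le_eqVlt => /predU1P[<-|t0]; first exact: g_cvg0.
by apply/cvg_at_right_filter/derivable1_cvg; case: (g_derive _ t0 i).
Qed.

Lemma barrier_gt0_extend (t : R) : 0 <= t -> (forall i, 0 < g i t) ->
  exists2 e, 0 < e & forall u i, t < u -> u < t + e -> 0 < g i u.
Proof.
move=> t0 gt0.
have : \forall u \near t^'+, forall i, 0 < g i u.
  by apply: filter_forall => i; exact: cvgr_gt _ (barrier_cvg_right i t t0) 0 (gt0 i).
move=> /nbhs_ballP[e e0 He]; exists e => // u i tu ute; apply: He => //.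
by rewrite /ball /= ltr0_norm ?subr_lt0 // opprB ltrBlDl.
Qed.

Lemma barrier_ge0_at (t : R) : 0 < t -> (forall u i, 0 <= u -> u < t -> 0 < g i u) ->
  forall i, 0 <= g i t.
Proof.
move=> t0 before i.
have cvl : g i u @[u --> t^'-] --> g i t.
  by apply/cvg_at_left_filter/derivable1_cvg; case: (g_derive _ t0 i).
rewrite -(cvg_lim _ cvl) //; apply: limr_ge; first by apply/cvg_ex; exists (g i t).
near=> u; apply/ltW/before; last by near: u; exact: nbhs_left_lt.
by apply: ltW; near: u; exact: nbhs_left_gt.
Unshelve. all: by end_near. Qed.

(* At a first zero t > 0 of g i, g i t is a left minimum, forcing dg i t <= 0. *)
Lemma barrier_gt0_at (t : R) : 0 < t -> (forall u i, 0 <= u -> u < t -> 0 < g i u) ->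
  forall i, 0 < g i t.
Proof.
move=> t0 before i; have ge0 := barrier_ge0_at t t0 before.
rewrite lt_def ge0 andbT; apply/eqP => gi0.
have [gd gv] := g_derive _ t0 i.
have : dg i t <= 0.
  rewrite -gv; apply: (derive1_le0_of_left_min _ _ t t0 gd) => u tu ut.
  by rewrite gi0 ltW // before // ltW // -(subrr t).
by rewrite leNgt dg_gt0_at_zero.
Qed.

Lemma barrier_gt0 (t : R) : 0 <= t -> forall i, 0 < g i t.
Proof.
move=> t0 i; rewrite ltNge; apply/negP => git.
pose A := [set s | 0 <= s /\ forall u j, 0 <= u -> u <= s -> 0 < g j u].
have A_lt s : A s -> s < t.
  move=> [_ As]; rewrite ltNge; apply/negP => ts.
  by have := As t i t0 ts; rewrite ltNge git.
have A0 : A 0 by split => // u j u0 u0'; rewrite (@le_anti _ _ u 0) ?u0 ?u0'.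
have supA : has_sup A by split; [exists 0 | exists t => s /A_lt/ltW].
set tau := sup A.
have tau0 : 0 <= tau := sup_upper_bound supA A0.
have before u j : 0 <= u -> u < tau -> 0 < g j u.
  move=> u0 utau; have du : 0 < tau - u by rewrite subr_gt0.
  have [s [_ As] us] := sup_adherent du supA.
  by rewrite opprB addrC subrK in us; apply: As => //; apply: ltW.
have tau_gt0 j : 0 < g j tau.
  have [->|] := eqVneq tau 0; first exact: g0_gt0.
  by rewrite neq_lt ltNge tau0 /= => /barrier_gt0_at; apply.
have [e e0 after] := barrier_gt0_extend tau tau0 tau_gt0.
have Ae : A (tau + e / 2).
  split=> [|u j u0]; first by lra.
  have [utau _|tauu ue|-> _] := ltgtP u tau; [exact: before | | exact: tau_gt0].
  by apply: after => //; lra.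
by have := sup_upper_bound supA Ae; rewrite -/tau; lra.
Qed.
End Barrier.
End RealLemmas.

Section LowerRateOperator.
Context {R : realType} {X : finType} {Q : (X -> R) -> X -> R}.
Hypothesis hQ : lower_rate_op Q.

Lemma lower_rate_op_addc (h : X -> R) (mu : R) (z : X) :
  Q (fun w => h w + mu) z = Q h z.
Proof.
have [Qc Qsup _ _] := hQ; apply/eqP; rewrite eq_le; apply/andP; split.
  have := Qsup (fun w => h w + mu) (fun _ => - mu) z; rewrite Qc addr0.
  by have -> : (fun w => h w + mu + - mu) = h by apply/funext => w; rewrite addrK.
by have := Qsup h (fun _ => mu) z; rewrite Qc addr0.
Qed.

Lemma lower_rate_op_sum (I : Type) (s : seq I) (F : I -> X -> R) (z : X) :
  \sum_(i <- s) Q (F i) z <= Q (fun w => \sum_(i <- s) F i w) z.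
Proof.
have [Qc Qsup _ _] := hQ; elim: s => [|i s IHs].
  have -> : (fun w => \sum_(i <- [::]) F i w) = (fun=> 0).
    by apply/funext => w; rewrite big_nil.
  by rewrite big_nil Qc.
rewrite big_cons; apply: le_trans (lerD (lexx _) IHs) _.
have -> : (fun w => \sum_(j <- i :: s) F j w) = (fun w => F i w + \sum_(j <- s) F j w).
  by apply/funext => w; rewrite big_cons.
exact: Qsup.
Qed.

(* Decompose k over the indicators: superadditivity, homogeneity and nonnegative off-diagonal rates leave only the diagonal term. *)
Lemma lower_rate_op_ge_diag (k : X -> R) (z : X) : (forall w, 0 <= k w) ->
  k z * Q (indic z) z <= Q k z.
Proof.
move=> k_ge0; have [_ _ Qhom Qoff] := hQ.
have k_indic : k = (fun w => \sum_(y : X) k y * indic y w).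
  apply/funext => w; rewrite (bigD1 w) //= /indic eqxx mulr1 big1 ?addr0 //.
  by move=> y /negbTE; rewrite eq_sym => ->; rewrite mulr0.
rewrite {2}k_indic; apply: le_trans (lower_rate_op_sum _ _ _ _).
under eq_bigr do rewrite Qhom //.
rewrite (bigD1 z) //= lerDl; apply: sumr_ge0 => y yz.
by rewrite mulr_ge0 // Qoff // eq_sym.
Qed.

Lemma lower_rate_op_ge (h : X -> R) (m : R) (z : X) : (forall w, m <= h w) ->
  (h z - m) * Q (indic z) z <= Q h z.
Proof.
move=> mh; rewrite -(lower_rate_op_addc h (- m)).
by apply: (lower_rate_op_ge_diag (fun w => h w - m)) => w; rewrite subr_ge0.
Qed.

End LowerRateOperator.

Section Solution.
Context {R : realType} {X : finType} {Q : (X -> R) -> X -> R}.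
Context {f : X -> R} {T : R -> X -> R} (m : R).
Hypotheses (hQ : lower_rate_op Q) (hT : solves_lower_ode Q f T).
Hypothesis m_le_f : forall y, m <= f y.

Lemma solution_cvg0 (y : X) : T s y @[s --> 0^'+] --> T 0 y.
Proof. by have [_ _ Tr] := hT; exact: cvg_at_right0_of_quotient (Tr y). Qed.

Lemma solution_derive (t : R) (y : X) : 0 < t -> is_derive t 1 (T ^~ y) (Q (T t) y).
Proof. by move=> t0; have [_ Td _] := hT; exact: Td. Qed.

Lemma solution_ge (t : R) : 0 <= t -> forall y, m <= T t y.
Proof.
move=> t0 y; apply/ler_addgt0Pr => e e0.
pose eps := e / (t + 1).
have eps0 : 0 < eps by rewrite divr_gt0 //; lra.
have epsE : eps * (t + 1) = e by rewrite divfK //; lra.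
have [T0 _ _] := hT.
suff : 0 < T t y - m + eps * (t + 1) by lra.
apply: (@barrier_gt0 _ X (fun z s => T s z - m + eps * (s + 1))
                         (fun z s => Q (T s) z + eps)) => //.
- by move=> z; rewrite T0 add0r mulr1; have := m_le_f z; lra.
- move=> z; apply: cvgD; first by apply: cvgB; [exact: solution_cvg0 | exact: cvg_cst].
  by apply/cvg_at_right_filter/derivable1_cvg.
- move=> s s0 z; apply: is_derive_eq.
    by apply: is_deriveD; first apply: is_deriveB; first exact: solution_derive.
  by rewrite subr0 addr0 scaler1.
- move=> s z s0 g_ge0 gz0.
  have : 0 <= Q (T s) z.
    have := lower_rate_op_ge hQ (T s) (T s z) z.
    by rewrite subrr mul0r; apply => w; have := g_ge0 w; lra.
  lra.
Qed.

Lemma solution_gt (x : X) (t : R) : m < f x -> 0 <= t -> m < T t x.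
Proof.
move=> mfx t0.
pose c := `|Q (indic x) x|; pose N := (Num.truncn c).+1.
have Nc : c < N%:R := truncnS_gt c.
pose d := (f x - m) / 2.
have d0 : 0 < d by rewrite divr_gt0 // subr_gt0.
have [T0 _ _] := hT.
have E_gt0 (s : R) : 0 < expR s ^+ N := exprn_gt0 _ (expR_gt0 s).
suff : 0 < expR t ^+ N * (T t x - m) - d.
  move=> gt_gt0; have : 0 < expR t ^+ N * (T t x - m) by lra.
  by rewrite pmulr_rgt0; [lra | exact: E_gt0].
apply: (@barrier_gt0 _ unit (fun _ s => expR s ^+ N * (T s x - m) - d)
   (fun _ s => expR s ^+ N * (Q (T s) x + N%:R * (T s x - m))) _ _ _ _ t t0 tt).
- by move=> _; rewrite expR0 expr1n mul1r T0 /d; lra.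
- move=> _; apply: cvgB; last exact: cvg_cst.
  apply: cvgM; first by apply/cvg_at_right_filter/derivable1_cvg/ex_derive/is_derive_expRX.
  by apply: cvgB; [exact: solution_cvg0 | exact: cvg_cst].
- move=> s s0 _; apply: is_derive_eq.
    apply: is_deriveB; apply: is_deriveM; first exact: is_derive_expRX.
    by apply: is_deriveB; first exact: solution_derive.
  rewrite !subr0 /=.
  change (expR s ^+ N * Q (T s) x + (T s x - m) * (N%:R * expR s ^+ N) =
          expR s ^+ N * (Q (T s) x + N%:R * (T s x - m))); ring.
- move=> s _ s0 _ gs0.
  have Tm_gt0 : 0 < T s x - m by rewrite -(pmulr_rgt0 _ (E_gt0 s)); lra.
  have Q_lb : - c * (T s x - m) <= Q (T s) x.
    apply: le_trans _ (lower_rate_op_ge hQ (T s) m x (solution_ge s (ltW s0))).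
    by rewrite mulrC; apply: ler_wpM2l; [exact: ltW | exact: lerNnormlW].
  apply: mulr_gt0 => //.
  have : 0 < (N%:R - c) * (T s x - m) by rewrite mulr_gt0 // subr_gt0.
  rewrite mulrBl mulNr in Q_lb *; lra.
Qed.
End Solution.

Theorem lemma5 (R : realType) (X : finType) (Q : (X -> R) -> (X -> R))
  (f : X -> R) (T : R -> X -> R) (x : X) :
  lower_rate_op Q ->
  solves_lower_ode Q f T ->
  fmin f x < f x ->
  forall t : R, 0 <= t -> fmin f x < T t x.
Proof.
move=> hQ hT fx_gt_min t t0.
by apply: (solution_gt (fmin f x) hQ hT) => // y; exact: bigmin_le.
Qed.
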